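(* Let $1<q<n+1$ and $\lambda_i=\frac{i+\min\{i,q-1\}}{n+q-1}$ for $i=1,\dots,n-1$. Let $\mu$ be a finite Borel measure on $S^{n-1}$ satisfying $\frac{\mu(\xi_i\cap S^{n-1})}{|\mu|}<\lambda_i$ for every $i$-dimensional linear subspace $\xi_i\subset\mathbb R^n$ and every $i=1,\dots,n-1$, and let $\overline\mu_m$ be constructed as in the context. Then there exist $\widetilde\lambda_i\in(0,\lambda_i)$ ($i=1,\dots,n-1$), $N_0>0$ and $\eta_0\in(0,1)$ such that for all $m>N_0$, $$\frac{\overline\mu_m\big(\mathfrak N_{\eta_0}(\xi_i\cap S^{n-1})\big)}{|\mu|}<\widetilde\lambda_i$$ for every $i$-dimensional subspace $\xi_i\subset\mathbb R^n$ and every $i=1,\dots,n-1$.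
   Context: $|\nu|$ denotes total mass. For $\omega\subset S^{n-1}$ and $\eta>0$, $\mathfrak N_\eta(\omega)=\{v\in S^{n-1}: |v-u|<\eta\text{ for some }u\in\omega\}$. Construction: for each positive integer $m$, $U_{1,m},\dots,U_{\mathcal N_m,m}$ is a partition of $S^{n-1}$ into Borel sets of diameter less than $1/m$ with nonempty interior relative to $S^{n-1}$, $v_{i,m}\in U_{i,m}$ are in general position in dimension $n$, $\mu_m=\sum_{i=1}^{\mathcal N_m}(\mu(U_{i,m})+\mathcal N_m^{-2})\delta_{v_{i,m}}$ and $\overline\mu_m=\frac{|\mu|}{|\mu_m|}\mu_m$. *)

From HB Require Import structures.
From mathcomp Require Import all_boot all_order all_algebra.
From mathcomp Require Import all_classical all_reals all_analysis.
Set Implicit Arguments. Unset Strict Implicit. Unset Printing Implicit Defensive.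
Import Order.TTheory GRing.Theory Num.Theory numFieldNormedType.Exports.
Local Open Scope classical_set_scope.
Local Open Scope ring_scope.

(* The Borel sigma-algebra on R^n: generated by the open sets of the
   (product = Euclidean) topology of 'rV[R]_n. *)
Definition Rn_borel (R : realType) (n : nat) : set (set 'rV[R]_n) := (open : set_system 'rV[R]_n).
Definition Rn (R : realType) (n : nat) := g_sigma_algebraType (@Rn_borel R n).

Definition enorm (R : realType) (n : nat) (v : 'rV[R]_n) : R :=
  Num.sqrt (\sum_(j < n) v ord0 j ^+ 2).

Definition sphere (R : realType) (n : nat) : set 'rV[R]_n :=
  [set v | enorm v = 1].
Arguments sphere {R} n.

(* xi \cap S^{n-1}, xi a linear subspace given as the row space of a matrix *)
Definition subsp_sphere (R : realType) (n : nat) (xi : 'M[R]_n) : set 'rV[R]_n :=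
  [set v | (v <= xi)%MS /\ enorm v = 1].

Definition nbhd_sph (R : realType) (n : nat) (eta : R) (om : set 'rV[R]_n)
  : set 'rV[R]_n :=
  [set v | enorm v = 1 /\ exists2 u, om u & enorm (v - u) < eta].

Definition lam (R : realType) (n : nat) (q : R) (i : nat) : R :=
  (i%:R + Num.min i%:R (q - 1)) / (n%:R + q - 1).

(* The construction of the context, for a fixed m:
   N = N_m, U i = U_{i,m}, v i = v_{i,m}. *)
Definition good_partition (R : realType) (n : nat) (m : nat)
  (N : nat) (U : 'I_N -> set 'rV[R]_n) (v : 'I_N -> 'rV[R]_n) : Prop :=
      (forall i, measurable (U i : set (Rn R n))) /\
      (forall i, U i `<=` sphere n) /\
      (forall x, sphere n x -> exists i, U i x) /\
      (forall i j, i != j -> U i `&` U j = set0) /\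
      (forall i, exists d : R, d < m%:R^-1 /\
          forall x y, U i x -> U i y -> enorm (x - y) <= d) /\
      (forall i, exists x, exists r : R, 0 < r /\
          forall y, sphere n y -> enorm (y - x) < r -> U i y) /\
      (forall i, U i (v i)) /\
      (forall k (f : 'I_k -> 'I_N), injective f -> (k <= n)%N ->
          row_free (\matrix_(a < k) v (f a))).

Definition tmass (R : realType) (n : nat)
  (mu : set (Rn R n) -> \bar R) : R := fine (mu (sphere n)).

Definition mu_disc (R : realType) (n : nat) (mu : set (Rn R n) -> \bar R)
  (N : nat) (U : 'I_N -> set 'rV[R]_n) (v : 'I_N -> 'rV[R]_n)
  (A : set 'rV[R]_n) : R :=
  \sum_(i < N | `[< A (v i) >]) (fine (mu (U i)) + (N%:R ^+ 2)^-1).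

(* bar mu_m = |mu| / |mu_m| * mu_m ; note |mu_m| = mu_m(S^{n-1}) *)
Definition mu_bar (R : realType) (n : nat) (mu : set (Rn R n) -> \bar R)
  (N : nat) (U : 'I_N -> set 'rV[R]_n) (v : 'I_N -> 'rV[R]_n)
  (A : set 'rV[R]_n) : R :=
  tmass mu / mu_disc mu U v (sphere n) * mu_disc mu U v A.

(* Subspaces of dimension [i] are parametrised by the rank-[i] orthogonal projections, a
   compact subset of [R^(n*n)].  For each of them, continuity from above turns
   [mu(xi ∩ S) < lambda |mu|] into [mu(N_delta(xi ∩ S)) < lambda |mu|] for some [delta > 0],
   and subspaces with close projections have intersections with [S] within [delta/2] of each
   other; a finite subcover therefore gives one radius [r > 0] and one bound [C < lambda |mu|]
   with [mu(N_r(xi ∩ S)) <= C] for every [xi] of dimension [i].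
   If [v_{j,m}] lies in [N_eta(xi ∩ S)] with [eta + 1/m <= r], the whole cell [U_{j,m}] lies in
   [N_r(xi ∩ S)], so [mu_m(N_eta(xi ∩ S)) <= C + 1/N_m] while [|mu_m| = |mu| + 1/N_m].  A
   partition of the sphere into pieces of diameter [< 1/m] has more than [m] pieces, so for
   large [m] the normalised ratio stays below [(C + g)/|mu| < lambda], [g = (lambda |mu| - C)/2]. *)

From HB Require Import structures.
From mathcomp Require Import all_boot all_order all_algebra.
From mathcomp Require Import all_classical all_reals all_analysis.
From mathcomp Require Import ring lra zify.
Import Order.TTheory GRing.Theory Num.Theory numFieldNormedType.Exports.
Local Open Scope classical_set_scope.
Local Open Scope ring_scope.

Set Implicit Arguments. Unset Strict Implicit. Unset Printing Implicit Defensive.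

Section EuclideanNorm.
Variables (R : realType) (n : nat).
Implicit Types (x y z u v : 'rV[R]_n).

Definition sumsq v := \sum_(j < n) v ord0 j ^+ 2.

Lemma sumsq_ge0 v : 0 <= sumsq v.
Proof. by apply: sumr_ge0 => j _; exact: sqr_ge0. Qed.

Lemma enorm_ge0 v : 0 <= enorm v.
Proof. exact: sqrtr_ge0. Qed.

Lemma sqr_enorm v : enorm v ^+ 2 = sumsq v.
Proof. by rewrite /enorm sqr_sqrtr // sumsq_ge0. Qed.

Lemma enorm_coord v j : `|v ord0 j| <= enorm v.
Proof.
rewrite /enorm -sqrtr_sqr ler_sqrt ?sumsq_ge0 //.
by rewrite (bigD1 j) //= lerDl; apply: sumr_ge0 => k _; exact: sqr_ge0.
Qed.

Lemma enorm_le_sum v : enorm v <= \sum_j `|v ord0 j|.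
Proof.
have sum_ge0 : 0 <= \sum_j `|v ord0 j| by apply: sumr_ge0.
rewrite /enorm -(ger0_norm sum_ge0) -sqrtr_sqr ler_sqrt ?sqr_ge0 //.
rewrite [leRHS]expr2 mulr_suml; apply: ler_sum => j _.
rewrite -real_normK ?num_real // expr2 ler_wpM2l //.
by rewrite (bigD1 j) //= lerDl sumr_ge0.
Qed.

Lemma enorm_eq0 v : enorm v = 0 -> v = 0.
Proof.
move=> v0; apply/rowP => j; rewrite mxE; apply/eqP; rewrite -normr_le0.
by rewrite -v0 enorm_coord.
Qed.

Lemma enorm0 : enorm (0 : 'rV[R]_n) = 0.
Proof. by rewrite /enorm big1 ?sqrtr0 // => j _; rewrite mxE expr0n. Qed.

Lemma enormZ (c : R) v : enorm (c *: v) = `|c| * enorm v.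
Proof.
rewrite /enorm -sqrtr_sqr -sqrtrM ?sqr_ge0 //; congr Num.sqrt.
by rewrite mulr_sumr; apply: eq_bigr => j _; rewrite mxE exprMn.
Qed.

Lemma enormN v : enorm (- v) = enorm v.
Proof. by rewrite -scaleN1r enormZ normrN1 mul1r. Qed.

Lemma enormBC x y : enorm (x - y) = enorm (y - x).
Proof. by rewrite -enormN opprB. Qed.

Lemma cauchy_schwarz (a b : 'I_n -> R) :
  (\sum_j a j * b j) ^+ 2 <= (\sum_j a j ^+ 2) * (\sum_j b j ^+ 2).
Proof.
set A := \sum_j a j ^+ 2; set B := \sum_j a j * b j; set C := \sum_j b j ^+ 2.
have C_ge0 : 0 <= C by apply: sumr_ge0 => j _; exact: sqr_ge0.
have [C0|C_neq0] := eqVneq C 0.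
  have b0 j : b j = 0.
    apply/eqP; rewrite -sqrf_eq0; move/eqP: C0.
    rewrite psumr_eq0 => [/allP/(_ j (mem_index_enum j))|k _]; [exact | exact: sqr_ge0].
  by rewrite C0 mulr0 /B big1 ?expr0n // => j _; rewrite b0 mulr0.
(* [0 <= \sum_j (C a_j - B b_j)^2 = C (A C - B^2)] *)
have : 0 <= \sum_j (C * a j - B * b j) ^+ 2 by apply: sumr_ge0 => j _; exact: sqr_ge0.
have expand j : (C * a j - B * b j) ^+ 2 =
    C ^+ 2 * a j ^+ 2 - (2 * C * B) * (a j * b j) + B ^+ 2 * b j ^+ 2 by ring.
rewrite (eq_bigr _ (fun j _ => expand j)) !big_split /= sumrN -!mulr_sumr -/A -/B -/C.
have -> : C ^+ 2 * A - 2 * C * B * B + B ^+ 2 * C = C * (A * C - B ^+ 2) by ring.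
by rewrite pmulr_rge0 ?lt0r ?C_neq0 // subr_ge0 mulrC.
Qed.

Lemma enormD x y : enorm (x + y) <= enorm x + enorm y.
Proof.
have sum_ge0 : 0 <= enorm x + enorm y by rewrite addr_ge0 ?enorm_ge0.
rewrite {1}/enorm -(ger0_norm sum_ge0) -sqrtr_sqr ler_sqrt ?sqr_ge0 //.
rewrite -/(sumsq (x + y)) sqrrD !sqr_enorm.
have -> : sumsq (x + y) = sumsq x + (\sum_j x ord0 j * y ord0 j) *+ 2 + sumsq y.
  rewrite /sumsq -sumrMnl -!big_split /=.
  by apply: eq_bigr => j _; rewrite mxE sqrrD.
rewrite lerD2r lerD2l lerMn2r /= (le_trans (ler_norm _)) //.
rewrite -(@ler_pXn2r _ 2) //= ?nnegrE ?mulr_ge0 ?enorm_ge0 //.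
by rewrite real_normK ?num_real // exprMn !sqr_enorm cauchy_schwarz.
Qed.

Lemma enorm_triangle x y z : enorm (x - z) <= enorm (x - y) + enorm (y - z).
Proof. by rewrite (le_trans _ (enormD _ _)) // addrA subrK. Qed.

Lemma lerB_enorm x y : enorm x - enorm y <= enorm (x - y).
Proof. by have := enorm_triangle x y 0; rewrite !subr0 lerBlDr addrC. Qed.

Lemma enorm_continuous : continuous (@enorm R n).
Proof.
have -> : @enorm R n = Num.sqrt \o sumsq by [].
move=> v; apply: continuous_comp; last exact: sqrt_continuous.
apply: (continuous_big add_continuous (F := fun j x => x ord0 j ^+ 2)) => j _ w.
by apply: continuousM; exact: coord_continuous.
Qed.

Lemma enorm_subr_continuous u : continuous (fun v => enorm (v - u)).
Proof.
move=> v; have sub_u : {for v, continuous (fun w : 'rV[R]_n => w - u)}.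
  exact: (@continuousB _ _ _ id (cst u) v cvg_id (@cst_continuous _ _ u v)).
by apply: continuous_comp; [exact: sub_u | exact: enorm_continuous].
Qed.

End EuclideanNorm.

Definition mx_l1 (R : realType) m k (M : 'M[R]_(m, k)) := \sum_a \sum_b `|M a b|.

Lemma enorm_mulmx (R : realType) m k (w : 'rV[R]_m) (M : 'M[R]_(m, k)) :
  enorm (w *m M) <= enorm w * mx_l1 M.
Proof.
apply: (le_trans (enorm_le_sum _)).
rewrite /mx_l1 exchange_big /= mulr_sumr; apply: ler_sum => b _.
rewrite mxE mulr_sumr (le_trans (ler_norm_sum _ _ _)) //; apply: ler_sum => a _.
by rewrite normrM ler_wpM2r // enorm_coord.
Qed.

Section IdempotentRank.
Variables (F : fieldType) (n : nat).

Lemma idem_base_mulmx r (C : 'M[F]_(n, r)) (D : 'M[F]_(r, n)) C' D' :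
  C' *m C = 1%:M -> D *m D' = 1%:M -> (C *m D) *m (C *m D) = C *m D ->
  D *m C = 1%:M.
Proof.
move=> CC' DD' /(congr1 (fun M => C' *m M *m D')) /=.
have -> : C' *m (C *m D *m (C *m D)) *m D' = (C' *m C) *m (D *m C) *m (D *m D').
  by rewrite !mulmxA.
have -> : C' *m (C *m D) *m D' = (C' *m C) *m (D *m D') by rewrite !mulmxA.
by rewrite CC' DD' !mul1mx !mulmx1.
Qed.

Lemma mxrank_idem (P : 'M[F]_n) : P *m P = P -> (\rank P)%:R = \tr P.
Proof.
move=> PP; have [C' CC'] := row_fullP (col_base_full P).
have [D' DD'] := row_freeP (row_base_free P).
have PE := mulmx_base P.
have DC := idem_base_mulmx CC' DD' (etrans (congr2 mulmx PE PE) (etrans PP (esym PE))).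
by rewrite -{2}PE mxtrace_mulC DC mxtrace1.
Qed.

Lemma idem_submxE (P : 'M[F]_n) (w : 'rV[F]_n) : P *m P = P ->
  (w <= P)%MS = (w *m P == w).
Proof.
move=> PP; apply/idP/idP; last by move/eqP <-; rewrite submxMl.
by case/submxP => D ->; rewrite -mulmxA PP.
Qed.

End IdempotentRank.

Section OrthogonalProjection.
Variables (R : realType) (n : nat).
Implicit Types (P xi : 'M[R]_n) (u v w x : 'rV[R]_n).

Definition orthoproj P := P^T = P /\ P *m P = P.

Lemma gram_unit r (B : 'M[R]_(r, n)) : row_free B -> B *m B^T \in unitmx.
Proof.
move=> freeB; rewrite -row_free_unit -kermx_eq0; apply/rowV0P => w /sub_kermxP wG.
have : enorm (w *m B) = 0.
  have /(congr1 (fun M : 'M[R]_1 => M ord0 ord0)) : (w *m B) *m (w *m B)^T = 0.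
    by rewrite trmx_mul mulmxA -(mulmxA w) wG mul0mx.
  rewrite mxE [RHS]mxE /enorm -/(sumsq _) => sum0.
  rewrite (_ : sumsq _ = 0) ?sqrtr0 // -[RHS]sum0.
  by apply: eq_bigr => j _; rewrite expr2 [(w *m B)^T _ _]mxE.
by move/enorm_eq0; rewrite -(mul0mx 1 B) => /(row_free_inj freeB).
Qed.

Lemma orthoproj_exists xi : exists2 P, orthoproj P & (P :=: xi)%MS.
Proof.
suff [P projP eqPB] : exists2 P, orthoproj P & (P :=: row_base xi)%MS.
  by exists P => //; exact: eqmx_trans eqPB (eq_row_base xi).
move: (row_base xi) (row_base_free xi) => B /gram_unit unitG.
have symG : (B *m B^T)^T = B *m B^T by rewrite trmx_mul trmxK.
exists (B^T *m invmx (B *m B^T) *m B); first split.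
- by rewrite !trmx_mul trmxK trmx_inv symG mulmxA.
- set G := B *m B^T.
  have -> : B^T *m invmx G *m B *m (B^T *m invmx G *m B) =
      B^T *m (invmx G *m G) *m invmx G *m B by rewrite !mulmxA.
  by rewrite mulVmx // mulmx1.
apply/eqmxP; rewrite submxMl /=.
have {1}-> : B = B *m (B^T *m invmx (B *m B^T) *m B) by rewrite !mulmxA mulmxV // mul1mx.
exact: submxMl.
Qed.

Lemma orthoproj_entry P a b : orthoproj P -> `|P a b| <= 1.
Proof.
case=> symP PP.
have diagE c : P c c = \sum_k P c k ^+ 2.
  by rewrite -{1}PP mxE; apply: eq_bigr => k _; rewrite expr2 -{2}symP mxE.
have sqr_le_diag c d : P c d ^+ 2 <= P c c.
  by rewrite diagE (bigD1 d) //= lerDl sumr_ge0 // => k _; exact: sqr_ge0.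
have diag_le1 : P a a <= 1.
  have := sqr_le_diag a a; have : 0 <= P a a by rewrite diagE sumr_ge0 // => k _; exact: sqr_ge0.
  rewrite expr2; nra.
rewrite -(@ler_pXn2r _ 2) ?nnegrE //= expr1n real_normK ?num_real //.
exact: le_trans (sqr_le_diag a b) diag_le1.
Qed.

Lemma subsp_sphere_eqmx xi xi' : (xi :=: xi')%MS -> subsp_sphere xi = subsp_sphere xi'.
Proof.
by move=> eq_xi; apply/seteqP; split => w [xi_w w1]; split; rewrite // ?eq_xi // -eq_xi.
Qed.

(* With [P] the projection onto [xi], [|x P - x| <= |x - u| * mx_l1 (P - 1)] for every [u] in
   [subsp_sphere xi]. *)
Lemma subsp_sphere_closed xi x : enorm x = 1 ->
  (forall e, 0 < e -> exists2 u, subsp_sphere xi u & enorm (x - u) < e) ->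
  subsp_sphere xi x.
Proof.
have [P [_ PP] eqPxi] := orthoproj_exists xi.
rewrite -(subsp_sphere_eqmx eqPxi) => x1 near_x; split => //; rewrite idem_submxE //.
set K := mx_l1 (P - 1%:M).
have K_ge0 : 0 <= K by apply: sumr_ge0 => a _; apply: sumr_ge0.
have defect_le e : 0 < e -> enorm (x *m P - x) <= e * K.
  move=> e0; have [u [uP _] xu] := near_x e e0.
  have -> : x *m P - x = (x - u) *m (P - 1%:M).
    move: uP; rewrite idem_submxE // => /eqP uPE.
    by rewrite mulmxBr mulmx1 mulmxBl uPE opprB addrA subrK.
  by rewrite (le_trans (enorm_mulmx _ _)) // ler_wpM2r // ltW.
rewrite -subr_eq0; apply/eqP/enorm_eq0/eqP; rewrite eq_le enorm_ge0 andbT.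
rewrite leNgt; apply/negP => defect_gt0.
have := defect_le _ (divr_gt0 defect_gt0 (ltr_wpDl K_ge0 ltr01)).
rewrite mulrAC ler_pdivlMr ?ltr_wpDl //; nra.
Qed.

(* Project [v] onto [xi] and renormalise. *)
Lemma subsp_sphere_approx P xi v (eps : R) : P *m P = P -> subsp_sphere P v ->
  mx_l1 (xi - P) <= eps -> eps < 1 / 2 ->
  exists2 w, subsp_sphere xi w & enorm (w - v) <= 2 * eps.
Proof.
move=> PP [vP v1] l1_le eps_lt.
set w0 := v *m xi.
have w0v : enorm (w0 - v) <= eps.
  move: vP; rewrite idem_submxE // => /eqP vPE.
  by rewrite /w0 -{2}vPE -mulmxBr (le_trans (enorm_mulmx _ _)) // v1 mul1r.
have w0_ge : 1 - eps <= enorm w0 by have := lerB_enorm v w0; rewrite enormBC v1; lra.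
have w0_gt0 : 0 < enorm w0 by lra.
exists ((enorm w0)^-1 *: w0); first split.
- by rewrite scalemx_sub // submxMl.
- by rewrite enormZ ger0_norm ?invr_ge0 ?enorm_ge0 // mulVf // gt_eqF.
have : enorm ((enorm w0)^-1 *: w0 - w0) <= eps.
  rewrite -[X in _ - X]scale1r -scalerBl enormZ -[X in _ * X](ger0_norm (enorm_ge0 w0)).
  rewrite -normrM mulrBl mulVf ?gt_eqF // mul1r distrC.
  have := lerB_enorm w0 v; have := lerB_enorm v w0; rewrite v1 (enormBC v) => h1 h2.
  by rewrite ler_norml; apply/andP; split; lra.
by have := enorm_triangle ((enorm w0)^-1 *: w0) w0 v; lra.
Qed.

End OrthogonalProjection.

Lemma mx_entry_le_norm (R : realType) m k (M : 'M[R]_(m, k)) a b : `|M a b| <= `|M|.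
Proof.
rewrite [leRHS]/Num.Def.normr /= mx_normrE.
by apply/bigmax_geP; right => /=; exists (a, b).
Qed.

Lemma mx_l1_vec_mx (R : realType) m k (y : 'rV[R]_(m * k)) :
  mx_l1 (vec_mx y) <= (m * k)%:R * `|y|.
Proof.
apply: (@le_trans _ _ (\sum_(a < m) \sum_(b < k) `|y|)).
  by apply: ler_sum => a _; apply: ler_sum => b _; rewrite mxE mx_entry_le_norm.
by rewrite !sumr_const !card_ord mulrnAC -mulrnA mulr_natl.
Qed.

Section ClosedEquations.
Variables (R : realType) (T : topologicalType).

Lemma closed_eqfun (f g : T -> R) : continuous f -> continuous g ->
  closed [set x | f x = g x].
Proof.
move=> cf cg; have cfg : continuous (f - g).
  by move=> x; apply: continuousB; [exact: cf | exact: cg].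
have := (continuous_closedP (f - g)).1 cfg _ (@closed_eq R 0).
congr closed; apply/seteqP; split => x /=; first exact: subr0_eq.
by move=> fgx; change (f x - g x = 0); rewrite fgx subrr.
Qed.

Lemma closed_forall_eqfun (C : Type) (f g : C -> T -> R) :
  (forall c, continuous (f c)) -> (forall c, continuous (g c)) ->
  closed [set x | forall c, f c x = g c x].
Proof.
move=> cf cg; rewrite (_ : [set x | _] = \bigcap_(c in setT) [set x | f c x = g c x]).
  by apply: closed_bigI => c _; exact: closed_eqfun.
by apply/seteqP; split => [x fgx c _ | x fgx c]; [exact: fgx | exact: fgx c I].
Qed.

End ClosedEquations.

Section ProjectionCompactness.
Variables (R : realType) (n i : nat).

(* Rank-[i] orthogonal projections, seen in [R^(n*n)] to use its compactness theory. *)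
Definition proj_vecs : set 'rV[R]_(n * n) :=
  [set x | orthoproj (vec_mx x) /\ \rank (vec_mx x) = i].

Lemma vec_mx_entry_continuous a b : continuous (fun x : 'rV[R]_(n * n) => vec_mx x a b).
Proof.
have -> : (fun x : 'rV[R]_(n * n) => vec_mx x a b) = fun x => x ord0 (mxvec_index a b).
  by apply: funext => x; rewrite mxE.
exact: coord_continuous.
Qed.

Lemma orthoproj_rankE (P : 'M[R]_n) : orthoproj P -> (\rank P = i) <-> (\tr P = i%:R).
Proof.
case=> _ /mxrank_idem <-; split=> [-> //|].
by move/eqP; rewrite eqr_nat => /eqP.
Qed.

Lemma proj_vecs_closed : closed proj_vecs.
Proof.
have cont_sum (h : 'I_n -> 'rV[R]_(n * n) -> R) : (forall k, continuous (h k)) ->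
    continuous (fun x => \sum_k h k x).
  by move=> ch; apply: (continuous_big add_continuous (F := h)) => k _.
have cont_entry := vec_mx_entry_continuous.
rewrite (_ : proj_vecs =
  [set x | forall c : 'I_n * 'I_n, vec_mx x c.2 c.1 = vec_mx x c.1 c.2] `&`
  [set x | forall c : 'I_n * 'I_n,
     \sum_k vec_mx x c.1 k * vec_mx x k c.2 = vec_mx x c.1 c.2] `&`
  [set x | \sum_k vec_mx x k k = i%:R]).
  apply: closedI; first apply: closedI.
  - by apply: closed_forall_eqfun => c.
  - apply: closed_forall_eqfun => c //; apply: cont_sum => k x.
    by apply: continuousM; apply: cont_entry.
  - by apply: closed_eqfun; [exact: cont_sum | exact: cst_continuous].
apply/seteqP; split => x /=.
- case=> [[symx idemx] /(orthoproj_rankE (conj symx idemx)) trx].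
  split; first split.
  + by move=> c; rewrite -{1}symx mxE.
  + by move=> c; rewrite -{3}idemx mxE.
  + by rewrite -trx.
- case=> [[symx idemx] trx].
  have projx : orthoproj (vec_mx x).
    by split; apply/matrixP => a b; rewrite mxE; [exact: symx (a, b) | exact: idemx (a, b)].
  by split; last exact/(orthoproj_rankE projx).
Qed.

Lemma proj_vecs_compact : compact proj_vecs.
Proof.
have box_compact : compact [set x : 'rV[R]_(n * n) | forall k, x ord0 k \in `[(-1 : R), 1]].
  by apply: (@rV_compact _ _ (fun=> `[(-1 : R), 1]%classic)) => _; exact: segment_compact.
apply: subclosed_compact proj_vecs_closed box_compact _ => x [projx _] k.
case/mxvec_indexP: k => a b; have := orthoproj_entry a b projx.
by rewrite mxE in_itv /= -ler_norml.
Qed.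

Lemma orthoproj_cover (delta : 'M[R]_n -> R) :
  (forall P, orthoproj P -> \rank P = i -> 0 < delta P) ->
  exists s : seq 'M[R]_n, (forall P, P \in s -> orthoproj P /\ \rank P = i) /\
    forall xi : 'M[R]_n, \rank xi = i -> exists2 P, P \in s &
      forall u, subsp_sphere xi u -> exists2 w, subsp_sphere P w & enorm (w - u) < delta P.
Proof.
move=> delta_gt0.
pose eps x := Num.min (delta (vec_mx x) / 4) (1 / 4).
pose rho x := eps x / (n * n).+1%:R.
have eps_gt0 x : proj_vecs x -> 0 < eps x.
  by case=> projx rkx; rewrite lt_min !divr_gt0 ?delta_gt0.
have [D sub_D cover_D] :
    finite_subset_cover proj_vecs (fun x => ball x (rho x)) proj_vecs.
  move: proj_vecs_compact; rewrite compact_cover; apply.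
  - by move=> x _; exact: ball_open.
  - by move=> x Kx; exists x => //; apply: ballxx; rewrite divr_gt0 ?eps_gt0.
exists [seq vec_mx x | x <- finmap.enum_fset D]; split.
  by move=> P /mapP [x /sub_D + ->]; rewrite inE.
move=> xi rkxi; have [P' projP' eqP'xi] := orthoproj_exists xi.
have KP' : proj_vecs (mxvec P') by rewrite /proj_vecs /= mxvecK eqP'xi.
have [x Dx /= ball_x] := cover_D _ KP'.
have Kx : proj_vecs x by have := sub_D x Dx; rewrite inE.
exists (vec_mx x); first by apply/mapP; exists x.
rewrite -(subsp_sphere_eqmx eqP'xi) => u Tu.
have l1_le : mx_l1 (vec_mx x - P') <= eps x.
  rewrite -[P']mxvecK -linearB (le_trans (mx_l1_vec_mx _)) //.
  rewrite -[eps x](@divfK _ (n * n).+1%:R) ?pnatr_eq0 // -/(rho x) mulrC.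
  rewrite ler_pM ?ler_nat ?normr_ge0 //; apply: ltW.
  by move: ball_x; rewrite -ball_normE /=.
have eps_lt : eps x < 1 / 2.
  by apply: le_lt_trans (_ : 1 / 4 < 1 / 2); rewrite ?ge_min ?lexx ?orbT //; lra.
have [w Tw wu] := subsp_sphere_approx projP'.2 Tu l1_le eps_lt.
exists w => //; apply: le_lt_trans wu _.
have : eps x <= delta (vec_mx x) / 4 by rewrite ge_min lexx.
have : 0 < delta (vec_mx x) by case: Kx => projx rkx; exact: delta_gt0.
lra.
Qed.

End ProjectionCompactness.

Lemma exists_natSinv_lt (R : realType) (e : R) : 0 < e -> exists k : nat, k.+1%:R^-1 < e.
Proof.
move=> e_gt0; have [k _ ltk] := near_infty_natSinv_lt (PosNum e_gt0).
by exists k; exact: (ltk k (leqnn k)).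
Qed.

Section SphereNeighbourhoods.
Variables (R : realType) (n : nat).
Implicit Types (xi : 'M[R]_n) (om : set 'rV[R]_n).

Lemma Rn_open_measurable (A : set 'rV[R]_n) : open A -> measurable (A : set (Rn R n)).
Proof. exact: sub_sigma_algebra. Qed.

Lemma sphere_measurable : measurable (sphere n : set (Rn R n)).
Proof.
rewrite -[sphere n]setCK; apply: measurableC; apply: Rn_open_measurable.
rewrite openC; apply: (continuous_closedP _).1 (@closed_eq R 1).
exact: enorm_continuous.
Qed.

Lemma nbhd_sph_measurable eta om : measurable (nbhd_sph eta om : set (Rn R n)).
Proof.
rewrite (_ : nbhd_sph eta om = sphere n `&`
    \bigcup_(u in om) ((fun v => enorm (v - u)) @^-1` [set r | r < eta])).
  apply: measurableI; first exact: sphere_measurable.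
  apply: Rn_open_measurable; apply: bigcup_open => u _.
  exact: (continuousP _).1 (@enorm_subr_continuous R n u) _ (@open_lt R eta).
by apply/seteqP; split => v [v1 [u omu vu]]; split => //; exists u.
Qed.

Lemma le_nbhd_sph eta eta' om : eta <= eta' -> nbhd_sph eta om `<=` nbhd_sph eta' om.
Proof.
by move=> le_eta v [v1 [u omu vu]]; split => //; exists u => //; exact: lt_le_trans le_eta.
Qed.

Lemma subsp_sphere_sub_nbhd eta xi : 0 < eta ->
  subsp_sphere xi `<=` nbhd_sph eta (subsp_sphere xi).
Proof. by move=> eta_gt0 v Tv; split; [exact: Tv.2 | exists v; rewrite // subrr enorm0]. Qed.

Lemma bigcap_nbhd_sph xi :
  \bigcap_k nbhd_sph k.+1%:R^-1 (subsp_sphere xi) = subsp_sphere xi.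
Proof.
apply/seteqP; split => [v near_v | v Tv k _]; last first.
  by apply: subsp_sphere_sub_nbhd Tv; rewrite invr_gt0 ltr0Sn.
have [v1 _] := near_v 0%N I.
apply: subsp_sphere_closed v1 _ => e /exists_natSinv_lt [k ltk].
have [_ [u Tu vu]] := near_v k I.
by exists u => //; exact: lt_trans ltk.
Qed.

Lemma subsp_sphere_measurable xi : measurable (subsp_sphere xi : set (Rn R n)).
Proof.
by rewrite -bigcap_nbhd_sph; apply: bigcap_measurableType => k _; exact: nbhd_sph_measurable.
Qed.

End SphereNeighbourhoods.

Section FiniteMeasureOfNeighbourhoods.
Variables (R : realType) (n : nat) (mu : {finite_measure set (Rn R n) -> \bar R}).
Implicit Types (xi : 'M[R]_n) (A B : set (Rn R n)).

Lemma fine_measure_ge0 A : 0 <= fine (mu A).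
Proof. by apply: fine_ge0; exact: measure_ge0. Qed.

Lemma le_fine_measure A B : measurable A -> measurable B -> A `<=` B ->
  fine (mu A) <= fine (mu B).
Proof.
move=> mA mB AB; apply: fine_le; rewrite ?inE; try exact: fin_num_measure.
by apply: le_measure => //; rewrite inE.
Qed.

Lemma fine_measure_nbhd_sph_lt xi c : fine (mu (subsp_sphere xi)) < c ->
  exists k, fine (mu (nbhd_sph k.+1%:R^-1 (subsp_sphere xi))) < c.
Proof.
move=> Txi_lt; pose F k := nbhd_sph k.+1%:R^-1 (subsp_sphere xi) : set (Rn R n).
have mF k : measurable (F k) by exact: nbhd_sph_measurable.
have : mu \o F @ \oo --> mu (\bigcap_k F k).
  apply: nonincreasing_cvg_mu => //.
  - by rewrite ltey_eq fin_num_measure.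
  - by apply: bigcap_measurableType => k _.
  - apply/nonincreasing_seqP => k; apply/subsetPset/le_nbhd_sph.
    by rewrite lef_pV2 ?posrE ?ltr0Sn // ler_nat.
rewrite bigcap_nbhd_sph -(fineK (fin_num_measure mu _ (subsp_sphere_measurable xi))).
case/fine_cvgP => _ /cvgr_lt /(_ _ Txi_lt) [k _ ltk].
by exists k; exact: ltk k (leqnn k).
Qed.

Lemma nbhd_sph_mass_bound i c : 0 < c ->
  (forall xi, \rank xi = i -> fine (mu (subsp_sphere xi)) < c) ->
  exists C r, [/\ 0 <= C, C < c, 0 < r &
    forall xi, \rank xi = i -> fine (mu (nbhd_sph r (subsp_sphere xi))) <= C].
Proof.
move=> c_gt0 Txi_lt.
have /choice [k_of k_ofP] : forall P : 'M[R]_n, exists k, \rank P = i ->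
    fine (mu (nbhd_sph k.+1%:R^-1 (subsp_sphere P))) < c.
  move=> P; case: (eqVneq (\rank P) i) => [rkP | neq_rk]; last first.
    by exists 0%N => rkP; rewrite rkP eqxx in neq_rk.
  by have [k ltk] := fine_measure_nbhd_sph_lt (Txi_lt P rkP); exists k.
pose mass P := fine (mu (nbhd_sph (k_of P).+1%:R^-1 (subsp_sphere P))).
pose delta P : R := (k_of P).+1%:R^-1 / 2.
have delta_gt0 P : 0 < delta P by rewrite divr_gt0 ?invr_gt0 ?ltr0Sn.
have [s [s_proj s_cover]] := @orthoproj_cover R n i delta (fun P _ _ => delta_gt0 P).
exists (\big[Num.max/0]_(P <- s) mass P), ((\max_(P <- s) k_of P).+1%:R^-1 / 2).
split.
- exact: bigmax_ge_id.
- by rewrite big_seq; apply: bigmax_lt => // P /s_proj [_ /k_ofP].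
- by rewrite divr_gt0 ?invr_gt0 ?ltr0Sn.
move=> xi rkxi; have [P Ps near_P] := s_cover xi rkxi.
have r_le : (\max_(P <- s) k_of P).+1%:R^-1 / 2 <= delta P.
  by rewrite ler_pM2r // lef_pV2 ?posrE ?ltr0Sn // ler_nat ltnS (leq_bigmax_seq _ Ps).
apply: bigmax_sup_seq Ps _ _ => //; apply: le_fine_measure; try exact: nbhd_sph_measurable.
move=> x [x1 [u Tu xu]]; split => //; have [w Tw wu] := near_P u Tu.
exists w => //; apply: le_lt_trans (enorm_triangle x u w) _.
rewrite (enormBC u w) [_.+1%:R^-1]splitr; apply: ltrD => //.
exact: lt_le_trans xu r_le.
Qed.

End FiniteMeasureOfNeighbourhoods.

Section DiscreteMeasure.
Variables (R : realType) (n N : nat) (mu : {finite_measure set (Rn R n) -> \bar R}).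
Variables (U : 'I_N -> set 'rV[R]_n) (v : 'I_N -> 'rV[R]_n).
Implicit Types A B : set 'rV[R]_n.

Lemma sum_inv_sqr_natr : \sum_(j < N) (N%:R ^+ 2)^-1 = N%:R^-1 :> R.
Proof.
rewrite sumr_const card_ord; case: N => [|k]; first by rewrite !mulr0n invr0.
by rewrite expr2 invfM -mulrnAr -[_^-1 *+ _]mulr_natr mulVf ?mulr1 ?pnatr_eq0.
Qed.

Lemma le_mu_disc A B : A `<=` B -> mu_disc mu U v A <= mu_disc mu U v B.
Proof.
move=> AB; rewrite /mu_disc !(big_mkcond (fun j => `[< _ >])) ler_sum // => j _.
have term_ge0 : 0 <= fine (mu (U j)) + (N%:R ^+ 2)^-1.
  by rewrite addr_ge0 ?fine_measure_ge0 // invr_ge0 exprn_ge0.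
case: (asboolP (A (v j))) => [/AB/asboolP -> //|_].
by case: ifP.
Qed.

Lemma mu_disc_ge0 A : 0 <= mu_disc mu U v A.
Proof.
by apply: sumr_ge0 => j _; rewrite addr_ge0 ?fine_measure_ge0 // invr_ge0 exprn_ge0.
Qed.

Lemma le_mu_bar A B : A `<=` B -> mu_bar mu U v A <= mu_bar mu U v B.
Proof.
move=> AB; rewrite /mu_bar ler_wpM2l ?le_mu_disc //.
by rewrite divr_ge0 ?mu_disc_ge0 // fine_measure_ge0.
Qed.

Lemma mu_bar_divE A : tmass mu != 0 ->
  mu_bar mu U v A / tmass mu = mu_disc mu U v A / mu_disc mu U v (sphere n).
Proof.
by move=> M_neq0; rewrite /mu_bar mulrAC [tmass mu * _ * _]mulrAC mulfV // mul1r mulrC.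
Qed.

End DiscreteMeasure.

Lemma eq_nat_dist_lt1 (R : numDomainType) (k l : nat) : `|k%:R - l%:R : R| < 1 -> k = l.
Proof.
wlog le_kl : k l / (k <= l)%N.
  move=> wlog_kl; case/orP: (leq_total k l) => [/wlog_kl //|le_lk].
  by rewrite distrC => /(wlog_kl _ _ le_lk).
rewrite distrC -natrB // ger0_norm // -[1]/(1%:R) ltr_nat; lia.
Qed.

Section Partition.
Variables (R : realType) (n m N : nat) (mu : {finite_measure set (Rn R n) -> \bar R}).
Variables (U : 'I_N -> set 'rV[R]_n) (v : 'I_N -> 'rV[R]_n).
Hypothesis partUv : good_partition m U v.

Lemma partition_measurable j : measurable (U j : set (Rn R n)).
Proof. by case: partUv. Qed.

Lemma partition_sub_sphere j : U j `<=` sphere n.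
Proof. by case: partUv => _ []. Qed.

Lemma partition_cover x : sphere n x -> exists j, U j x.
Proof. by case: partUv => _ [_ [covU _]]; exact: covU. Qed.

Lemma partition_trivIset : trivIset setT U.
Proof.
case: partUv => _ [_ [_ [disjU _]]] j k _ _ [x [Ujx Ukx]].
by apply/eqP; apply: contraT => /disjU /seteqP [/(_ x (conj Ujx Ukx))].
Qed.

Lemma partition_diam j x y : U j x -> U j y -> enorm (x - y) < m%:R^-1.
Proof.
case: partUv => _ [_ [_ [_ [/(_ j) [d [ltd diamU]] _]]]] Ujx Ujy.
exact: le_lt_trans (diamU x y Ujx Ujy) ltd.
Qed.

Lemma partition_center j : U j (v j).
Proof. by case: partUv => _ [_ [_ [_ [_ [_ []]]]]]. Qed.

(* The points [(t, sqrt (1 - t^2), 0, ..., 0)], [t = k/m], are [1/m] apart, so lie in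
   pairwise distinct cells. *)
Lemma partition_card_gt : (0 < m)%N -> (2 <= n)%N -> (m < N)%N.
Proof.
move=> m_gt0 n_ge2.
pose i0 : 'I_n := Ordinal (ltnW n_ge2); pose i1 : 'I_n := Ordinal n_ge2.
have m_gt0R : (0 : R) < m%:R by rewrite ltr0n.
pose t (k : 'I_m.+1) : R := k%:R / m%:R.
pose p k : 'rV[R]_n :=
  \row_a (if a == i0 then t k else if a == i1 then Num.sqrt (1 - t k ^+ 2) else 0).
have p_sphere k : sphere n (p k).
  have t_ge0 : 0 <= t k by rewrite divr_ge0.
  have t_le1 : t k <= 1 by rewrite ler_pdivrMr // mul1r ler_nat -ltnS.
  rewrite /sphere /= /enorm (bigD1 i0) //= (bigD1 i1) //= big1 => [|a /andP [a0 a1]].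
    by rewrite !mxE !eqxx /= sqr_sqrtr ?subr_ge0 ?expr_le1 // addr0 addrC subrK sqrtr1.
  by rewrite mxE (negbTE a0) (negbTE a1) expr0n.
have [f fP] := choice (fun k => partition_cover (p_sphere k)).
suff f_inj : injective f by have := leq_card f f_inj; rewrite !card_ord.
move=> k l fkl; apply/val_inj/eq_nat_dist_lt1.
have near_kl : enorm (p k - p l) < m%:R^-1.
  by apply: (partition_diam (fP k)); rewrite fkl; exact: fP l.
have := le_lt_trans (enorm_coord (p k - p l) i0) near_kl.
rewrite !mxE eqxx -mulrBl normrM [`|m%:R^-1|]ger0_norm ?invr_ge0 ?ler0n //.
by rewrite -{2}[m%:R^-1]mul1r ltr_pM2r ?invr_gt0 //; apply.
Qed.

Lemma fine_measure_cells (P : pred 'I_N) :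
  fine (mu (\big[setU/set0]_(j < N | P j) (U j : set (Rn R n)))) =
  \sum_(j < N | P j) fine (mu (U j)).
Proof.
rewrite measure_bigsetU_ord_cond => [|j _|j k _ _]; last 2 first.
- exact: partition_measurable.
- exact: partition_trivIset.
by rewrite sum_fine // => j _; exact: fin_num_measure (partition_measurable j).
Qed.

Lemma mu_disc_sphere : mu_disc mu U v (sphere n) = tmass mu + N%:R^-1.
Proof.
rewrite /mu_disc (eq_bigl xpredT) => [|j]; last first.
  by apply/asboolP; apply/partition_sub_sphere/partition_center.
rewrite big_split /= sum_inv_sqr_natr /tmass -fine_measure_cells; congr (fine (mu _) + _).
apply/seteqP; split; last first.
  by move=> x Sx; have [j Ujx] := partition_cover Sx; rewrite (bigD1 j) //=; left.
apply: (big_ind (fun X => X `<=` sphere n)) => // [X Y XS YS x [/XS|/YS] //|j _].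
exact: partition_sub_sphere.
Qed.

Lemma mu_disc_le_measure A (B : set (Rn R n)) : measurable B ->
  (forall j, A (v j) -> U j `<=` B) -> mu_disc mu U v A <= fine (mu B) + N%:R^-1.
Proof.
move=> mB subB; rewrite /mu_disc big_split /= -fine_measure_cells; apply: lerD.
  apply: le_fine_measure => //.
    by apply: bigsetU_measurable => j _; exact: partition_measurable.
  apply: (big_ind (fun X => X `<=` B)) => // [X Y XB YB x [/XB|/YB] //|j].
  by move/asboolP; exact: subB.
rewrite -sum_inv_sqr_natr [leRHS](bigID (fun j => `[< A (v j) >])) /= lerDl.
by apply: sumr_ge0 => j _; rewrite invr_ge0 exprn_ge0.
Qed.

Lemma partition_cell_sub_nbhd eta r (om : set 'rV[R]_n) j :
  eta + m%:R^-1 <= r -> nbhd_sph eta om (v j) -> U j `<=` nbhd_sph r om.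
Proof.
move=> le_r [_ [u omu vu]] x Ujx; split; first exact: partition_sub_sphere Ujx.
exists u => //; apply: lt_le_trans le_r; apply: le_lt_trans (enorm_triangle x (v j) u) _.
by rewrite addrC ltrD // (partition_diam Ujx (partition_center j)).
Qed.

Lemma partition_inv_card_le : (0 < m)%N -> (2 <= n)%N -> N%:R^-1 <= m%:R^-1 :> R.
Proof.
move=> m_gt0 n_ge2; have lt_mN := partition_card_gt m_gt0 n_ge2.
by rewrite lef_pV2 ?posrE ?ltr0n ?ler_nat ?(ltnW lt_mN) // (ltn_trans m_gt0 lt_mN).
Qed.

Lemma mu_disc_nbhd_sph_le eta r (om : set 'rV[R]_n) : eta + m%:R^-1 <= r ->
  mu_disc mu U v (nbhd_sph eta om) <= fine (mu (nbhd_sph r om)) + N%:R^-1.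
Proof.
move=> le_r; apply: mu_disc_le_measure; first exact: nbhd_sph_measurable.
by move=> j; exact: partition_cell_sub_nbhd.
Qed.

End Partition.

Lemma ratio_lt_shift (R : realFieldType) (C g M t d : R) : 0 <= C -> 0 < M -> 0 <= t ->
  t < g -> d <= C + t -> d / (M + t) < (C + g) / M.
Proof.
move=> C_ge0 M_gt0 t_ge0 t_lt d_le; have Mt_gt0 : 0 < M + t by lra.
rewrite ltr_pdivrMr // (le_lt_trans d_le) //.
have -> : (C + g) / M * (M + t) = C + g + (C + g) / M * t by field; rewrite gt_eqF.
have : 0 <= (C + g) / M * t by apply: mulr_ge0 => //; apply: divr_ge0; lra.
lra.
Qed.

Section RatioBound.
Variables (R : realType) (n : nat) (mu : {finite_measure set (Rn R n) -> \bar R}).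
Variables (N : nat -> nat) (U : forall m, 'I_(N m) -> set 'rV[R]_n).
Variable (v : forall m, 'I_(N m) -> 'rV[R]_n).
Arguments U : clear implicits.
Arguments v : clear implicits.
Hypothesis partUv : forall m, (0 < m)%N -> good_partition m (U m) (v m).

Definition nbhd_ratio_bound i (lt N0 eta : R) :=
  forall m : nat, N0 < m%:R -> forall xi : 'M[R]_n, \rank xi = i ->
    mu_bar mu (U m) (v m) (nbhd_sph eta (subsp_sphere xi)) / tmass mu < lt.

Lemma nbhd_ratio_bound_mono i lt N0 N1 eta0 eta1 : N0 <= N1 -> eta1 <= eta0 ->
  nbhd_ratio_bound i lt N0 eta0 -> nbhd_ratio_bound i lt N1 eta1.
Proof.
move=> le_N le_eta bound m N1m xi rkxi.
apply: le_lt_trans (bound m (le_lt_trans le_N N1m) xi rkxi).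
by rewrite ler_wpM2r ?invr_ge0 ?fine_measure_ge0 //; apply/le_mu_bar/le_nbhd_sph.
Qed.

Lemma rank_nbhd_ratio_bound i L : (0 < i < n)%N -> 0 < L ->
  (forall xi, \rank xi = i -> fine (mu (subsp_sphere xi)) / tmass mu < L) ->
  exists2 lt, 0 < lt < L &
    exists N0 eta, [/\ 0 < N0, 0 < eta & nbhd_ratio_bound i lt N0 eta].
Proof.
case/andP=> i_gt0 i_lt_n L_gt0 Txi_lt; have n_ge2 : (1 < n)%N := leq_ltn_trans i_gt0 i_lt_n.
set M := tmass mu; have [M0 | M_neq0] := eqVneq M 0.
  (* the ratio is then [_ / 0 = 0] *)
  exists (L / 2); first by apply/andP; split; lra.
  by exists 1, 1; split => // m _ xi _; rewrite -/M M0 invr0 mulr0 divr_gt0.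
have M_gt0 : 0 < M by rewrite lt0r M_neq0 fine_measure_ge0.
have [C [r [C_ge0 C_lt r_gt0 massC]]] : exists C r, [/\ 0 <= C, C < L * M, 0 < r &
    forall xi, \rank xi = i -> fine (mu (nbhd_sph r (subsp_sphere xi))) <= C].
  by apply: nbhd_sph_mass_bound (mulr_gt0 L_gt0 M_gt0) _ => xi /Txi_lt; rewrite ltr_pdivrMr.
pose g := (L * M - C) / 2; have g_gt0 : 0 < g by rewrite divr_gt0 // subr_gt0.
exists ((C + g) / M).
  by apply/andP; split; [rewrite divr_gt0 ?addr_ge0 // ltr_wpDl | rewrite ltr_pdivrMr // /g; lra].
exists (2 / r + g^-1), (r / 2); split; rewrite ?addr_gt0 ?divr_gt0 ?invr_gt0 //.
move=> m N0_lt xi rkxi.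
have [r2_gt0 ginv_gt0] : 0 < 2 / r /\ 0 < g^-1 by rewrite divr_gt0 ?invr_gt0.
have m_gt0R : (0 : R) < m%:R by apply: lt_trans N0_lt; rewrite addr_gt0.
have m_gt0 : (0 < m)%N by rewrite -(ltr_nat R).
have inv_m_lt_r : m%:R^-1 < r / 2.
  by rewrite -invf_plt ?posrE ?divr_gt0 // invf_div; lra.
have inv_m_lt_g : m%:R^-1 < g by rewrite -invf_plt ?posrE //; lra.
have part := partUv m_gt0.
have inv_N_lt_g : (N m)%:R^-1 < g.
  exact: le_lt_trans (partition_inv_card_le part m_gt0 n_ge2) inv_m_lt_g.
rewrite mu_bar_divE // (mu_disc_sphere mu part) -/M.
apply: ratio_lt_shift C_ge0 M_gt0 _ inv_N_lt_g _; first by rewrite invr_ge0.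
have le_r : r / 2 + m%:R^-1 <= r by lra.
apply: le_trans (mu_disc_nbhd_sph_le mu part _ le_r) _.
by rewrite lerD2r massC.
Qed.

End RatioBound.

Lemma common_thresholds (R : realType) (k : nat) (B : 'I_k -> R -> R -> Prop) :
  (forall j N0 N1 e0 e1, N0 <= N1 -> e1 <= e0 -> B j N0 e0 -> B j N1 e1) ->
  (forall j, exists N0 e, [/\ 0 < N0, 0 < e & B j N0 e]) ->
  exists2 N0, 0 < N0 & exists2 e, 0 < e < 1 & forall j, B j N0 e.
Proof.
move=> B_mono B_ex.
have /choice [p pP] : forall j, exists p : R * R, [/\ 0 < p.1, 0 < p.2 & B j p.1 p.2].
  by move=> j; have [N0 [e [N0_gt0 e_gt0 Bj]]] := B_ex j; exists (N0, e).
exists (\big[Num.max/1]_j (p j).1); first exact: lt_le_trans ltr01 (bigmax_ge_id _ _ _ _).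
exists (\big[Num.min/2^-1]_j (p j).2).
  apply/andP; split; first by apply: lt_bigmin => // j _; case: (pP j).
  by apply: le_lt_trans (bigmin_le_id _ _ _ _) _; rewrite invf_lt1 ?ltr1n.
move=> j; have [_ _ Bj] := pP j.
by apply: B_mono Bj; [exact: le_bigmax | exact: bigmin_le].
Qed.

Lemma lam_gt0 (R : realType) n (q : R) i : 1 < q -> (0 < i)%N -> 0 < lam n q i.
Proof.
move=> q_gt1 i_gt0; rewrite /lam divr_gt0 //.
  by rewrite addr_gt0 ?ltr0n // lt_min ltr0n i_gt0 subr_gt0.
by have : (0 : R) <= n%:R by []; lra.
Qed.

Theorem lemma5p10 (R : realType) (n : nat) (q : R)
  (hq1 : 1 < q) (hq2 : q < n.+1%:R)
  (mu : {finite_measure set (Rn R n) -> \bar R})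
  (hmu_supp : mu (~` sphere n) = 0%E)
  (hmu : forall i : nat, (1 <= i <= n.-1)%N ->
     forall xi : 'M[R]_n, \rank xi = i ->
       fine (mu (subsp_sphere xi)) / tmass mu < lam n q i)
  (N : nat -> nat) (U : forall m, 'I_(N m) -> set 'rV[R]_n)
  (v : forall m, 'I_(N m) -> 'rV[R]_n)
  (hcons : forall m, (0 < m)%N -> good_partition m (U m) (v m)) :
  exists lt : nat -> R,
    (forall i : nat, (1 <= i <= n.-1)%N -> 0 < lt i < lam n q i) /\
    exists2 N0 : R, 0 < N0 &
    exists2 eta0 : R, 0 < eta0 < 1 &
      forall m : nat, N0 < m%:R ->
      forall i : nat, (1 <= i <= n.-1)%N ->
      forall xi : 'M[R]_n, \rank xi = i ->
        mu_bar mu (U m) (v m) (nbhd_sph eta0 (subsp_sphere xi)) / tmass mu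
          < lt i.
Proof.
have in_range i : (1 <= i <= n.-1)%N <-> (0 < i < n)%N by split; lia.
have /choice [lt ltP] : forall i, exists lt : R, (0 < i < n)%N ->
    0 < lt < lam n q i /\
    exists N0 eta, [/\ 0 < N0, 0 < eta & nbhd_ratio_bound mu U v i lt N0 eta].
  move=> i; case: (boolP (0 < i < n)%N) => [irange | /negP out]; last by exists 0.
  have /andP [i_gt0 _] := irange.
  have [lt lt_range bound] := rank_nbhd_ratio_bound hcons irange
    (lam_gt0 n hq1 i_gt0) (hmu i (proj2 (in_range i) irange)).
  by exists lt.
pose B (j : 'I_n) N0 eta := (0 < j)%N -> nbhd_ratio_bound mu U v j (lt j) N0 eta.
have B_ex j : exists N0 eta, [/\ 0 < N0, 0 < eta & B j N0 eta].
  case: (posnP j) => [j0 | j_gt0]; first by exists 1, 1; split => //; rewrite /B j0.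
  have [_ [N0 [eta [N0_gt0 eta_gt0 Bj]]]] := ltP j (introT andP (conj j_gt0 (ltn_ord j))).
  by exists N0, eta; split => // _.
have B_mono j N0 N1 e0 e1 : N0 <= N1 -> e1 <= e0 -> B j N0 e0 -> B j N1 e1.
  by move=> le_N le_e Bj j_gt0; exact: nbhd_ratio_bound_mono le_N le_e (Bj j_gt0).
have [N0 N0_gt0 [eta eta_range bound]] := common_thresholds B_mono B_ex.
exists lt; split; first by move=> i /in_range /ltP [].
exists N0 => //; exists eta => // m ltm i /in_range /andP [i_gt0 i_lt_n] xi rkxi.
exact: (bound (Ordinal i_lt_n) i_gt0 m ltm xi rkxi).
Qed.
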